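(* Let $\mathcal{A}$ be an abelian category. (1) Let $0\to N_1\to N\to N_2\to 0$ be a short exact sequence and $M$ an object of $\mathcal{A}$ such that $N_1$ and $N_2$ are strongly $M$-Rickart. Then $N$ is strongly $M$-Rickart. (2) Let $0\to M_1\to M\to M_2\to 0$ be a short exact sequence and $N$ an object of $\mathcal{A}$ such that $N$ is dual strongly $M_1$-Rickart and dual strongly $M_2$-Rickart. Then $N$ is dual strongly $M$-Rickart.
   Context: A morphism $f:X\to Y$ is a section if $f'f=1_X$ for some $f'$, a retraction if $ff'=1_Y$ for some $f'$. A monomorphism $k:K\to X$ is fully invariant if for every $h:X\to X$ there is $\alpha:K\to K$ with $hk=k\alpha$; an epimorphism $c:X\to C$ is fully coinvariant if for every $h:X\to X$ there is $\gamma:C\to C$ with $ch=\gamma c$. For objects $M,N$: $N$ is strongly $M$-Rickart if the kernel of every morphism $f:M\to N$ is a fully invariant section; $N$ is dual strongly $M$-Rickart if the cokernel of every morphism $f:M\to N$ is a fully coinvariant retraction. *)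

From HB Require Import structures.
From mathcomp Require Import all_boot all_algebra.
Set Implicit Arguments. Unset Strict Implicit. Unset Printing Implicit Defensive.
Import GRing.Theory.
Local Open Scope ring_scope.

Record PreaddCat := {
  ob :> Type;
  hom : ob -> ob -> zmodType;
  idm : forall a, hom a a;
  comp : forall a b c, hom b c -> hom a b -> hom a c;
  compA : forall a b c d (h : hom c d) (g : hom b c) (f : hom a b),
      comp h (comp g f) = comp (comp h g) f;
  comp1m : forall a b (f : hom a b), comp (idm b) f = f;
  compm1 : forall a b (f : hom a b), comp f (idm a) = f;
  compDl : forall a b c (g g' : hom b c) (f : hom a b),
      comp (g + g') f = comp g f + comp g' f;
  compDr : forall a b c (g : hom b c) (f f' : hom a b),
      comp g (f + f') = comp g f + comp g f'
}.

Arguments idm {_} a.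
Arguments comp {_ a b c}.
Arguments hom {_}.

Section Notions.
Variable C : PreaddCat.

Definition is_mono {a b : C} (f : hom a b) : Prop :=
  forall w (g h : hom w a), comp f g = comp f h -> g = h.

Definition is_epi {a b : C} (f : hom a b) : Prop :=
  forall w (g h : hom b w), comp g f = comp h f -> g = h.

Definition is_kernel {x y k : C} (f : hom x y) (kk : hom k x) : Prop :=
  comp f kk = 0 /\
  forall w (g : hom w x), comp f g = 0 ->
    exists u : hom w k, comp kk u = g /\ forall u' : hom w k, comp kk u' = g -> u' = u.

Definition is_cokernel {x y q : C} (f : hom x y) (cc : hom y q) : Prop :=
  comp cc f = 0 /\
  forall w (g : hom y w), comp g f = 0 ->
    exists u : hom q w, comp u cc = g /\ forall u' : hom q w, comp u' cc = g -> u' = u.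

Definition is_zero_object (z : C) : Prop :=
  forall a, (forall f g : hom z a, f = g) /\ (forall f g : hom a z, f = g).

Definition is_product (a b p : C) (p1 : hom p a) (p2 : hom p b) : Prop :=
  forall w (f : hom w a) (g : hom w b),
    exists u : hom w p, (comp p1 u = f /\ comp p2 u = g) /\
      forall u' : hom w p, comp p1 u' = f -> comp p2 u' = g -> u' = u.

Definition is_abelian : Prop :=
  (exists z : C, is_zero_object z) /\
  (forall a b : C, exists p (p1 : hom p a) (p2 : hom p b), is_product p1 p2) /\
  (forall (x y : C) (f : hom x y), exists k (kk : hom k x), is_kernel f kk) /\
  (forall (x y : C) (f : hom x y), exists q (cc : hom y q), is_cokernel f cc) /\
  (forall (k x : C) (m : hom k x), is_mono m ->
      exists y (f : hom x y), is_kernel f m) /\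
  (forall (y q : C) (e : hom y q), is_epi e ->
      exists x (f : hom x y), is_cokernel f e).

Definition short_exact {a b c : C} (f : hom a b) (g : hom b c) : Prop :=
  is_kernel g f /\ is_cokernel f g.

Definition is_section {a b : C} (f : hom a b) : Prop :=
  exists f' : hom b a, comp f' f = idm a.

Definition is_retraction {a b : C} (f : hom a b) : Prop :=
  exists f' : hom b a, comp f f' = idm b.

Definition fully_invariant {k x : C} (kk : hom k x) : Prop :=
  forall h : hom x x, exists alpha : hom k k, comp h kk = comp kk alpha.

Definition fully_coinvariant {x c : C} (cc : hom x c) : Prop :=
  forall h : hom x x, exists gamma : hom c c, comp cc h = comp gamma cc.

(* N is strongly M-Rickart: the kernel of every f : M -> N is a fully
   invariant section (kernels are unique up to iso, and both properties are
   iso-invariant, so we quantify over all kernels; every kernel is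
   automatically mono). *)
Definition strongly_rickart (M N : C) : Prop :=
  forall (f : hom M N) (K : C) (k : hom K M),
    is_kernel f k -> is_section k /\ fully_invariant k.

Definition dual_strongly_rickart (M N : C) : Prop :=
  forall (f : hom M N) (Q : C) (c : hom N Q),
    is_cokernel f c -> is_retraction c /\ fully_coinvariant c.

End Notions.

(* Write K = ker φ for φ : M → N, and K2 = ker (g φ), a fully invariant direct
   summand of M with retraction e.  On K2, φ factors through f as f ψ, and a
   map x into M is killed by φ exactly when it is killed by both g φ and ψ e.
   So K is the intersection of two fully invariant direct summands, K2 and
   ker (ψ e), and such an intersection is again one: it is cut out by the
   idempotent composite of the two projections.  Part (2) is part (1) in the
   opposite category. *)
From Pilot Require Import Defs.
From mathcomp Require Import all_boot ssralg.
Import GRing.Theory.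
Local Open Scope ring_scope.
Set Implicit Arguments. Unset Strict Implicit.

Local Notation "g ∘ f" := (Defs.comp g f) (at level 40, left associativity).

Definition has_kernels (C : PreaddCat) : Prop :=
  forall (x y : C) (f : hom x y), exists k (kk : hom k x), is_kernel f kk.

Section Preadditive.
Variable C : PreaddCat.

Lemma comp0m (a b c : C) (f : hom a b) : (0 : hom b c) ∘ f = 0.
Proof.
have := compDl (0 : hom b c) 0 f; rewrite addr0 => /eqP.
by rewrite -subr_eq subrr => /eqP.
Qed.

Lemma compm0 (a b c : C) (g : hom b c) : g ∘ (0 : hom a b) = 0.
Proof.
have := compDr g (0 : hom a b) 0; rewrite addr0 => /eqP.
by rewrite -subr_eq subrr => /eqP.
Qed.

Lemma kernel_mono (x y k : C) (f : hom x y) (kk : hom k x) :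
  is_kernel f kk -> is_mono kk.
Proof.
move=> [fk0 kerP] w g h kg_kh.
have fkg0 : f ∘ (kk ∘ g) = 0 by rewrite Defs.compA fk0 comp0m.
have [u [_ uniq_u]] := kerP _ _ fkg0.
by rewrite (uniq_u g erefl) (uniq_u h (esym kg_kh)).
Qed.

Lemma kernel_factor (x y k w : C) (f : hom x y) (kk : hom k x) (g : hom w x) :
  is_kernel f kk -> f ∘ g = 0 -> exists u : hom w k, kk ∘ u = g.
Proof. by move=> [_ kerP] /kerP [u [kuE _]]; exists u. Qed.

Lemma fully_invariant_kernel_comp (x y k w : C) (f : hom x y) (kk : hom k x)
    (h : hom x x) (u : hom w k) :
  is_kernel f kk -> fully_invariant kk -> f ∘ (h ∘ (kk ∘ u)) = 0.
Proof.
move=> [fk0 _] /(_ h) [al hkE].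
by rewrite (Defs.compA h) hkE -(Defs.compA kk) !Defs.compA fk0 !comp0m.
Qed.

Lemma section_proj_comp (a b w : C) (k : hom a b) (e : hom b a) (u : hom w a) :
  e ∘ k = idm a -> k ∘ e ∘ (k ∘ u) = k ∘ u.
Proof. by move=> ek; rewrite -Defs.compA (Defs.compA e) ek comp1m. Qed.

Section KernelMeet.
Variables (M X X1 X2 K K1 K2 : C).
Variables (phi : hom M X) (phi1 : hom M X1) (phi2 : hom M X2).
Variables (k : hom K M) (k1 : hom K1 M) (k2 : hom K2 M).
Hypothesis phi_meet : forall (W : C) (x : hom W M),
  phi ∘ x = 0 <-> phi1 ∘ x = 0 /\ phi2 ∘ x = 0.
Hypotheses (ker_k : is_kernel phi k) (ker_k1 : is_kernel phi1 k1)
  (ker_k2 : is_kernel phi2 k2).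

Lemma kernel_meet_section :
  is_section k1 -> is_section k2 -> fully_invariant k2 -> is_section k.
Proof.
move=> [e1 e1k1] [e2 e2k2] fi_k2.
have [phi1k0 phi2k0] := (phi_meet k).1 ker_k.1.
have [b1 k1b1] := kernel_factor ker_k1 phi1k0.
have [b2 k2b2] := kernel_factor ker_k2 phi2k0.
(* The composite of the projections onto K1 and K2 fixes K, and it lands in
   K1 ∩ K2 because k1 e1 preserves K2. *)
pose t := k1 ∘ e1 ∘ (k2 ∘ e2).
have phit0 : phi ∘ t = 0.
  apply/phi_meet; split.
    by rewrite /t !Defs.compA (proj1 ker_k1) !comp0m.
  have [al k2al] := fi_k2 (k1 ∘ e1).
  rewrite /t (Defs.compA (k1 ∘ e1)) k2al -(Defs.compA k2) Defs.compA.
  by rewrite (proj1 ker_k2) comp0m.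
have [s ksE] := kernel_factor ker_k phit0.
exists s; apply: (kernel_mono ker_k).
have p1k : k1 ∘ e1 ∘ k = k by rewrite -k1b1 section_proj_comp.
have p2k : k2 ∘ e2 ∘ k = k by rewrite -k2b2 section_proj_comp.
by rewrite Defs.compA ksE compm1 /t -Defs.compA p2k p1k.
Qed.

Lemma kernel_meet_fully_invariant :
  fully_invariant k1 -> fully_invariant k2 -> fully_invariant k.
Proof.
move=> fi_k1 fi_k2 h.
have [phi1k0 phi2k0] := (phi_meet k).1 ker_k.1.
have [b1 k1b1] := kernel_factor ker_k1 phi1k0.
have [b2 k2b2] := kernel_factor ker_k2 phi2k0.
have /phi_meet phihk0 : phi1 ∘ (h ∘ k) = 0 /\ phi2 ∘ (h ∘ k) = 0.
  by split; [rewrite -k1b1 | rewrite -k2b2]; exact: fully_invariant_kernel_comp.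
by have [al kalE] := kernel_factor ker_k phihk0; exists al.
Qed.

End KernelMeet.

Lemma comp_eq0_through_summand (N1 N N2 M K2 : C) (f : hom N1 N)
    (g : hom N N2) (phi : hom M N) (k2 : hom K2 M) (e : hom M K2)
    (psi : hom K2 N1) :
  is_mono f -> is_kernel (g ∘ phi) k2 -> e ∘ k2 = idm K2 ->
  phi ∘ k2 = f ∘ psi ->
  forall (W : C) (x : hom W M),
    phi ∘ x = 0 <-> (g ∘ phi) ∘ x = 0 /\ (psi ∘ e) ∘ x = 0.
Proof.
move=> f_mono ker_k2 ek2 phik2 W x.
have phiK2 (y : hom W K2) : phi ∘ (k2 ∘ y) = f ∘ (psi ∘ y).
  by rewrite !Defs.compA phik2.
have psieK2 (y : hom W K2) : psi ∘ e ∘ (k2 ∘ y) = psi ∘ y.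
  by rewrite -Defs.compA (Defs.compA e) ek2 comp1m.
split=> [phix0 | [gphix0 psiex0]].
  have gphix0 : (g ∘ phi) ∘ x = 0 by rewrite -Defs.compA phix0 compm0.
  split=> //; move: phix0; have [y <-] := kernel_factor ker_k2 gphix0.
  by rewrite psieK2 phiK2 -(compm0 _ f) => /f_mono.
move: psiex0; have [y <-] := kernel_factor ker_k2 gphix0.
by rewrite phiK2 psieK2 => ->; rewrite compm0.
Qed.

Lemma strongly_rickart_extension (N1 N N2 M : C) (f : hom N1 N)
    (g : hom N N2) :
  has_kernels C -> short_exact f g ->
  strongly_rickart M N1 -> strongly_rickart M N2 -> strongly_rickart M N.
Proof.
move=> kerC [f_ker_g _] R1 R2 phi K k ker_k.
have [K2 [k2 ker_k2]] := kerC _ _ (g ∘ phi).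
have [[e ek2] fi_k2] := R2 _ _ _ ker_k2.
have gphik2 : g ∘ (phi ∘ k2) = 0 by rewrite Defs.compA (proj1 ker_k2).
have [psi fpsiE] := kernel_factor f_ker_g gphik2.
have [K' [k' ker_k']] := kerC _ _ (psi ∘ e).
have [[e' ek'] fi_k'] := R1 _ _ _ ker_k'.
have meet := comp_eq0_through_summand (kernel_mono f_ker_g) ker_k2 ek2
  (esym fpsiE).
have sec_k2 : is_section k2 by exists e.
have sec_k' : is_section k' by exists e'.
split; first exact: (kernel_meet_section meet ker_k ker_k2 ker_k' sec_k2 sec_k'
  fi_k').
exact: (kernel_meet_fully_invariant meet ker_k ker_k2 ker_k' fi_k2 fi_k').
Qed.

End Preadditive.

Definition opposite (C : PreaddCat) : PreaddCat :=
  @Build_PreaddCat C (fun a b => hom b a) (@idm C)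
    (fun a b c g f => Defs.comp f g)
    (fun a b c d h g f => esym (Defs.compA f g h))
    (fun a b f => compm1 f) (fun a b f => comp1m f)
    (fun a b c g g' f => compDr f g g') (fun a b c g f f' => compDl f f' g).

Lemma short_exact_opposite (C : PreaddCat) (a b c : C) (f : hom a b)
    (g : hom b c) :
  short_exact f g -> short_exact (C := opposite C) g f.
Proof. by case. Qed.

Lemma opposite_has_kernels (C : PreaddCat) :
  (forall (x y : C) (f : hom x y), exists q (cc : hom y q), is_cokernel f cc) ->
  has_kernels (opposite C).
Proof. by move=> cokerC x y; exact: cokerC. Qed.

Lemma dual_strongly_rickart_opposite (C : PreaddCat) (M N : C) :
  dual_strongly_rickart M N <-> strongly_rickart (C := opposite C) N M.
Proof. by []. Qed.

Theorem theorem2p19 (A : PreaddCat) (HA : is_abelian A) :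
  (forall (N1 N N2 M : A) (f : hom N1 N) (g : hom N N2),
      short_exact f g ->
      strongly_rickart M N1 -> strongly_rickart M N2 ->
      strongly_rickart M N) /\
  (forall (M1 M M2 N : A) (f : hom M1 M) (g : hom M M2),
      short_exact f g ->
      dual_strongly_rickart M1 N -> dual_strongly_rickart M2 N ->
      dual_strongly_rickart M N).
Proof.
have [_ [_ [kerA [cokerA _]]]] := HA.
split=> [N1 N N2 M f g | M1 M M2 N f g fg /dual_strongly_rickart_opposite R1
  /dual_strongly_rickart_opposite R2].
  exact: strongly_rickart_extension.
apply/dual_strongly_rickart_opposite.
exact: (strongly_rickart_extension (opposite_has_kernels cokerA)
  (short_exact_opposite fg) R2 R1).
Qed.
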